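(* Every nilpotent right loop is solvable.
   Context: A right loop is a set $S$ with binary operation $\circ$ and two-sided identity $1$ such that each equation $X\circ a=b$ has a unique solution. A congruence on $S$ is an equivalence relation which is a right subloop of $S\times S$ (componentwise); an invariant right subloop is the class $T$ of $1$ under a congruence, and $S/T=\{T\circ x\}$ with $(T\circ x)\circ(T\circ y)=T\circ(x\circ y)$. Centralizing: for congruences $\beta,\gamma$ on $S$, $\gamma$ centralizes $\beta$ if there is a congruence $(\gamma|\beta)$ on the right loop $\beta\subseteq S\times S$ such that: (i) $(x,y)(\gamma|\beta)(u,v)\Rightarrow x\gamma u$; (ii) for each $(x,y)\in\beta$ the map $(u,v)\mapsto u$ from the $(\gamma|\beta)$-class of $(x,y)$ to the $\gamma$-class of $x$ is a bijection; (iii) $(x,y)\in\gamma\Rightarrow (x,x)(\gamma|\beta)(y,y)$; (iv) $(x,y)(\gamma|\beta)(u,v)\Rightarrow(y,x)(\gamma|\beta)(v,u)$; (v) $(x,y)(\gamma|\beta)(u,v)$ and $(y,z)(\gamma|\beta)(v,w)$ imply $(x,z)(\gamma|\beta)(u,w)$. A congruence centralized by $S\times S$ is central; there is a unique maximal central congruence $\zeta(S)$, and the center $\mathcal Z(S)$ is the $\zeta(S)$-class of $1$ (it is an abelian group under $\circ$). $S$ is nilpotent if the series $\mathcal Z_0=\{1\}$, $\mathcal Z_1=\mathcal Z(S)$, $\mathcal Z_{i+1}/\mathcal Z_i=\mathcal Z(S/\mathcal Z_i)$ reaches $\mathcal Z_n=S$ for some $n$. $S^{(1)}$ is the smallest invariant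 right subloop $N$ with $S/N$ an abelian group; $S^{(n)}=(S^{(n-1)})^{(1)}$; $S$ is solvable if $S^{(n)}=\{1\}$ for some $n$. *)

From Stdlib Require Import ClassicalEpsilon FunctionalExtensionality
  PropExtensionality ProofIrrelevance.

Record rloop := RLoop {
  car :> Type;
  op : car -> car -> car;
  one : car;
  op1x : forall x, op one x = x;
  opx1 : forall x, op x one = x;
  rsol : forall a b : car, exists! x, op x a = b }.

Arguments op {r} _ _.

Lemma sig_eq (A : Type) (P : A -> Prop) (u v : {x : A | P x}) :
  proj1_sig u = proj1_sig v -> u = v.
Proof.
  destruct u as [x p], v as [y q]; simpl; intros ->.
  rewrite (proof_irrelevance _ p q); reflexivity.
Qed.

Definition prod_op (L : rloop) (p q : L * L) : L * L :=
  (op (fst p) (fst q), op (snd p) (snd q)).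

Definition prodL (L : rloop) : rloop.
Proof.
  refine (RLoop (L * L) (prod_op L) (one L, one L) _ _ _).
  - intros [x y]; unfold prod_op; simpl; rewrite !op1x; reflexivity.
  - intros [x y]; unfold prod_op; simpl; rewrite !opx1; reflexivity.
  - intros [a1 a2] [b1 b2].
    destruct (rsol L a1 b1) as [x1 [H1 U1]].
    destruct (rsol L a2 b2) as [x2 [H2 U2]].
    exists (x1, x2); split.
    + unfold prod_op; simpl; rewrite H1, H2; reflexivity.
    + intros [y1 y2] E; unfold prod_op in E; simpl in E.
      injection E; intros E2 E1.
      rewrite (U1 y1 E1), (U2 y2 E2); reflexivity.
Defined.

Definition subloop (L : rloop) (P : L -> Prop) : Prop :=
  P (one L) /\ (forall a b, P a -> P b -> P (op a b)) /\
  (forall a b x, P a -> P b -> op x a = b -> P x).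

Definition sub_op (L : rloop) (P : L -> Prop) (H : subloop L P)
  (a b : {x : L | P x}) : {x : L | P x} :=
  exist _ (op (proj1_sig a) (proj1_sig b))
    (proj1 (proj2 H) _ _ (proj2_sig a) (proj2_sig b)).

Definition subL (L : rloop) (P : L -> Prop) (H : subloop L P) : rloop.
Proof.
  refine (RLoop {x : L | P x} (sub_op L P H) (exist _ (one L) (proj1 H)) _ _ _).
  - intros x; apply sig_eq; simpl; apply op1x.
  - intros x; apply sig_eq; simpl; apply opx1.
  - intros [a Ha] [b Hb].
    destruct (rsol L a b) as [x [Hx U]].
    exists (exist _ x (proj2 (proj2 H) a b x Ha Hb Hx)); split.
    + apply sig_eq; simpl; exact Hx.
    + intros [y Hy] E. apply sig_eq; simpl.
      apply U. apply (f_equal (@proj1_sig _ _)) in E. exact E.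
Defined.

Definition congruence (L : rloop) (R : L -> L -> Prop) : Prop :=
  (forall x, R x x) /\ (forall x y, R x y -> R y x) /\
  (forall x y z, R x y -> R y z -> R x z) /\
  subloop (prodL L) (fun p => R (fst p) (snd p)).

Definition cong_sub (L : rloop) (R : L -> L -> Prop) (H : congruence L R) :
  subloop (prodL L) (fun p => R (fst p) (snd p)) := proj2 (proj2 (proj2 H)).

Definition congL (L : rloop) (R : L -> L -> Prop) (H : congruence L R) : rloop :=
  subL (prodL L) _ (cong_sub L R H).

Definition pr (L : rloop) (R : L -> L -> Prop) (H : congruence L R)
  (p : congL L R H) : L * L := proj1_sig p.

(* gamma centralizes beta: conditions (i)-(v) of the paper. *)
Definition centralizes (S : rloop) (gamma beta : S -> S -> Prop)
  (Hb : congruence S beta) : Prop :=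
  exists C : congL S beta Hb -> congL S beta Hb -> Prop,
    congruence (congL S beta Hb) C /\
    (forall p q, C p q -> gamma (fst (pr _ _ _ p)) (fst (pr _ _ _ q))) /\
    (* (ii): u |-> first coordinate is a bijection from the C-class of p
       onto the gamma-class of the first coordinate of p *)
    (forall p u, gamma (fst (pr _ _ _ p)) u ->
       exists! q, C p q /\ fst (pr _ _ _ q) = u) /\
    (forall x y p q, gamma x y -> pr _ _ _ p = (x, x) -> pr _ _ _ q = (y, y) ->
       C p q) /\
    (forall p q p' q', C p q ->
       pr _ _ _ p' = (snd (pr _ _ _ p), fst (pr _ _ _ p)) ->
       pr _ _ _ q' = (snd (pr _ _ _ q), fst (pr _ _ _ q)) -> C p' q') /\
    (forall p1 q1 p2 q2 p3 q3, C p1 q1 -> C p2 q2 ->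
       snd (pr _ _ _ p1) = fst (pr _ _ _ p2) ->
       snd (pr _ _ _ q1) = fst (pr _ _ _ q2) ->
       pr _ _ _ p3 = (fst (pr _ _ _ p1), snd (pr _ _ _ p2)) ->
       pr _ _ _ q3 = (fst (pr _ _ _ q1), snd (pr _ _ _ q2)) -> C p3 q3).

Definition central (S : rloop) (beta : S -> S -> Prop) (Hb : congruence S beta)
  : Prop := centralizes S (fun _ _ => True) beta Hb.

Definition is_zeta (S : rloop) (zeta : S -> S -> Prop) : Prop :=
  exists Hz : congruence S zeta, central S zeta Hz /\
    forall beta (Hb : congruence S beta), central S beta Hb ->
      forall x y, beta x y -> zeta x y.

Definition center (S : rloop) (x : S) : Prop :=
  exists zeta, is_zeta S zeta /\ zeta x (one S).

Definition cls (L : rloop) (R : L -> L -> Prop) (x : L) : L -> Prop :=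
  fun y => R y x.

Definition qcar (L : rloop) (R : L -> L -> Prop) : Type :=
  {C : L -> Prop | exists x, C = cls L R x}.

Definition qproj (L : rloop) (R : L -> L -> Prop) (x : L) : qcar L R :=
  exist _ (cls L R x) (ex_intro _ x eq_refl).

Definition qrep (L : rloop) (R : L -> L -> Prop) (C : qcar L R) : L :=
  proj1_sig (constructive_indefinite_description _ (proj2_sig C)).

Lemma qrep_spec (L : rloop) (R : L -> L -> Prop) (C : qcar L R) :
  proj1_sig C = cls L R (qrep L R C).
Proof.
  unfold qrep; destruct (constructive_indefinite_description _ _); simpl; auto.
Qed.

Definition qop (L : rloop) (R : L -> L -> Prop) (A B : qcar L R) : qcar L R :=
  qproj L R (op (qrep L R A) (qrep L R B)).

Section QuotFacts.
Variables (L : rloop) (R : L -> L -> Prop) (H : congruence L R).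

Lemma cong_refl x : R x x. Proof. exact (proj1 H x). Qed.
Lemma cong_sym x y : R x y -> R y x. Proof. exact (proj1 (proj2 H) x y). Qed.
Lemma cong_trans x y z : R x y -> R y z -> R x z.
Proof. exact (proj1 (proj2 (proj2 H)) x y z). Qed.

Lemma cong_op a a' b b' : R a a' -> R b b' -> R (op a b) (op a' b').
Proof.
  intros Ha Hb. destruct (cong_sub L R H) as [_ [Hc _]].
  exact (Hc (a, a') (b, b') Ha Hb).
Qed.

Lemma cong_div a a' x x' : R a a' -> R (op x a) (op x' a') -> R x x'.
Proof.
  intros Ha Hb. destruct (cong_sub L R H) as [_ [_ Hd]].
  exact (Hd (a, a') (op x a, op x' a') (x, x') Ha Hb eq_refl).
Qed.

Lemma qproj_eq a b : R a b -> qproj L R a = qproj L R b.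
Proof.
  intros Hab; apply sig_eq; simpl; unfold cls.
  apply functional_extensionality; intros y; apply propositional_extensionality.
  split; intros Hy.
  - exact (cong_trans _ _ _ Hy Hab).
  - exact (cong_trans _ _ _ Hy (cong_sym _ _ Hab)).
Qed.

Lemma qproj_inv a b : qproj L R a = qproj L R b -> R a b.
Proof.
  intros E; apply (f_equal (@proj1_sig _ _)) in E; simpl in E.
  assert (Ea := f_equal (fun f => f a) E); simpl in Ea; unfold cls in Ea.
  rewrite <- Ea; apply cong_refl.
Qed.

Lemma qproj_rep C : qproj L R (qrep L R C) = C.
Proof. apply sig_eq; simpl; symmetry; apply qrep_spec. Qed.

Lemma rep_proj x : R (qrep L R (qproj L R x)) x.
Proof. apply qproj_inv; apply qproj_rep. Qed.

End QuotFacts.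

Definition quot (L : rloop) (R : L -> L -> Prop) (H : congruence L R) : rloop.
Proof.
  refine (RLoop (qcar L R) (qop L R) (qproj L R (one L)) _ _ _).
  - intros C; unfold qop. rewrite <- (qproj_rep L R C) at 2.
    apply qproj_eq; auto. rewrite <- (op1x L (qrep L R C)) at 2.
    apply cong_op; auto. apply rep_proj; auto. apply cong_refl; auto.
  - intros C; unfold qop. rewrite <- (qproj_rep L R C) at 2.
    apply qproj_eq; auto. rewrite <- (opx1 L (qrep L R C)) at 2.
    apply cong_op; auto. apply cong_refl; auto. apply rep_proj; auto.
  - intros A B.
    destruct (rsol L (qrep L R A) (qrep L R B)) as [x [Hx _]].
    assert (EX : qop L R (qproj L R x) A = B).
    { unfold qop. rewrite <- (qproj_rep L R B). apply qproj_eq; auto.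
      rewrite <- Hx. apply cong_op; auto. apply rep_proj; auto.
      apply cong_refl; auto. }
    exists (qproj L R x); split; [exact EX|].
    intros Y EY. rewrite <- (qproj_rep L R Y). apply qproj_eq; auto.
    rewrite <- EY in EX. unfold qop in EX. apply qproj_inv in EX; auto.
    apply (cong_div L R H (qrep L R A) (qrep L R A)); auto.
    apply cong_refl; auto.
    apply (cong_trans L R H _ (op (qrep L R (qproj L R x)) (qrep L R A))); [|exact EX].
    apply cong_op; auto. apply cong_sym; auto. apply rep_proj; auto.
    apply cong_refl; auto.
Defined.

(* The upper central series Z_0 = {1}, Z_{i+1}/Z_i = Z(S/Z_i) reaches S:
   each Z_i is an invariant right subloop (the class of 1 of a congruence R),
   and Z_{i+1} is the preimage in S of the center of S/Z_i. *)
Definition nilpotent (S : rloop) : Prop :=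
  exists (n : nat) (Z : nat -> S -> Prop),
    (forall x, Z 0 x <-> x = one S) /\
    (forall x, Z n x) /\
    forall i, i < n ->
      exists (R : S -> S -> Prop) (HR : congruence S R),
        (forall x, Z i x <-> R x (one S)) /\
        (forall x, Z (Datatypes.S i) x <-> center (quot S R HR) (qproj S R x)).

Definition abelian_group (L : rloop) : Prop :=
  (forall a b c : L, op (op a b) c = op a (op b c)) /\
  (forall a b : L, op a b = op b a) /\
  (forall a : L, exists b, op a b = one L /\ op b a = one L).

Definition is_derived (L : rloop) (N : L -> Prop) : Prop :=
  (exists (R : L -> L -> Prop) (HR : congruence L R),
     (forall x, N x <-> R x (one L)) /\ abelian_group (quot L R HR)) /\
  (forall (R : L -> L -> Prop) (HR : congruence L R),
     abelian_group (quot L R HR) -> forall x, N x -> R x (one L)).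

(* derived_trivial n L : L^(n) = {1} *)
Fixpoint derived_trivial (n : nat) (L : rloop) : Prop :=
  match n with
  | 0 => forall x : L, x = one L
  | Datatypes.S m => exists (N : L -> Prop) (HN : subloop L N),
      is_derived L N /\ derived_trivial m (subL L N HN)
  end.

Definition solvable (S : rloop) : Prop := exists n, derived_trivial n S.

From Stdlib Require Import Lia.

(* Let {1} = Z_0 <= Z_1 <= ... <= Z_n = S be the upper central series.
   1. Elements of the center of a right loop commute and associate with
      everything: this is read off from conditions (ii) and (iii) of a
      centralizing congruence (C_Q x C_Q) on zeta(Q).
   2. A quotient L/R is an abelian group iff R contains all commutators
      (ab, ba) and associators ((ab)c, a(bc)).
   3. L^(1) exists: it is the class of 1 of the meet of all congruences
      with abelian quotient.
   4. If f : L -> S is a homomorphism whose image is central modulo a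
      congruence R, then the pullback of R has abelian quotient, so
      f maps L^(1) into the R-class of 1.
   5. By induction on k: if L embeds in S with image inside Z_k, then
      L^(k) = {1}; indeed L^(1) embeds in S with image inside Z_(k-1).
   The theorem is the case L = S, k = n. *)

(* Central elements commute and associate.  The hypotheses on C are
   conditions (ii) and (iii) of "C_S x C_S centralizes zeta". *)
Section CentralClass.
Variables (Q : rloop) (zeta : Q -> Q -> Prop) (Hz : congruence Q zeta).
Variable C : congL Q zeta Hz -> congL Q zeta Hz -> Prop.
Hypothesis HC : congruence (congL Q zeta Hz) C.
Hypothesis C_lift : forall p (u : Q), True ->
  exists! q, C p q /\ fst (pr _ _ _ q) = u.
Hypothesis C_diag_pairs : forall (x y : Q) p q, True ->
  pr _ _ _ p = (x, x) -> pr _ _ _ q = (y, y) -> C p q.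

Lemma C_partner_unique p q1 q2 :
  C p q1 -> C p q2 -> fst (pr _ _ _ q1) = fst (pr _ _ _ q2) -> q1 = q2.
Proof.
  intros H1 H2 E.
  destruct (C_lift p (fst (pr _ _ _ q1)) I) as [q [_ U]].
  rewrite <- (U q1 (conj H1 eq_refl)). apply U. split; auto.
Qed.

Definition diag (d : Q) : congL Q zeta Hz := exist _ (d, d) (cong_refl Q zeta Hz d).

Variable a : Q.
Hypothesis a_central : zeta a (one Q).

Definition one_a : congL Q zeta Hz :=
  exist _ (one Q, a) (cong_sym Q zeta Hz _ _ a_central).

(* C-partners of (1, a) are stable under right translation by diagonals,
   since (1, a) o (1, 1) = (1, a) and (1, 1) C (d, d). *)
Lemma C_right_diag q d : C one_a q -> C one_a (op q (diag d)).
Proof.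
  intros H.
  assert (E : op one_a (diag (one Q)) = one_a).
  { apply sig_eq; simpl; unfold prod_op; simpl; rewrite !opx1; reflexivity. }
  rewrite <- E. apply (cong_op _ C HC); auto.
  apply (C_diag_pairs (one Q) d); reflexivity.
Qed.

Lemma C_left_diag d : C one_a (op (diag d) one_a).
Proof.
  assert (E : op (diag (one Q)) one_a = one_a).
  { apply sig_eq; simpl; unfold prod_op; simpl; rewrite !op1x; reflexivity. }
  rewrite <- E at 1. apply (cong_op _ C HC).
  - apply (C_diag_pairs (one Q) d); reflexivity.
  - apply (cong_refl _ C HC).
Qed.

(* (b, ab) and (b, ba) are both C-partners of (1, a): so ab = ba. *)
Lemma central_comm b : op a b = op b a.
Proof.
  assert (E : op one_a (diag b) = op (diag b) one_a).
  { apply (C_partner_unique one_a).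
    - apply C_right_diag, (cong_refl _ C HC).
    - apply C_left_diag.
    - simpl; rewrite opx1, op1x; reflexivity. }
  exact (f_equal (fun q => snd (pr _ _ _ q)) E).
Qed.

(* (bc, (ab)c) and (bc, a(bc)) are both C-partners of (1, a). *)
Lemma central_assoc b c : op (op a b) c = op a (op b c).
Proof.
  assert (E : op (op one_a (diag b)) (diag c) = op one_a (diag (op b c))).
  { apply (C_partner_unique one_a).
    - apply C_right_diag, C_right_diag, (cong_refl _ C HC).
    - apply C_right_diag, (cong_refl _ C HC).
    - simpl; rewrite !op1x; reflexivity. }
  exact (f_equal (fun q => snd (pr _ _ _ q)) E).
Qed.
End CentralClass.

Lemma center_comm_assoc (Q : rloop) (a : Q) : center Q a ->
  (forall b, op a b = op b a) /\ (forall b c, op (op a b) c = op a (op b c)).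
Proof.
  intros [zeta [[Hz [[C [HC [_ [Hlift [Hdiag _]]]]] _]] Ha]].
  split; intros.
  - exact (central_comm Q zeta Hz C HC Hlift Hdiag a Ha b).
  - exact (central_assoc Q zeta Hz C HC Hlift Hdiag a Ha b c).
Qed.

Lemma qproj_hom (L : rloop) R (HR : congruence L R) (x y : L) :
  @op (quot L R HR) (qproj L R x) (qproj L R y) = qproj L R (op x y).
Proof.
  change (qop L R (qproj L R x) (qproj L R y) = qproj L R (op x y)).
  unfold qop. apply qproj_eq; auto. apply cong_op; auto; apply rep_proj; auto.
Qed.

(* L/R is an abelian group iff R identifies associators and commutators;
   inverses come for free from right division. *)
Lemma quot_abelian_iff (L : rloop) R (HR : congruence L R) :
  abelian_group (quot L R HR) <->
  (forall a b c : L, R (op (op a b) c) (op a (op b c))) /\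
  (forall a b : L, R (op a b) (op b a)).
Proof.
  split.
  - intros [HA [HCm _]]. split; intros.
    + apply (qproj_inv L R HR). rewrite <- !(qproj_hom L R HR). apply HA.
    + apply (qproj_inv L R HR). rewrite <- !(qproj_hom L R HR). apply HCm.
  - intros [HA HCm]. split; [|split].
    + intros A B D.
      rewrite <- (qproj_rep L R A), <- (qproj_rep L R B), <- (qproj_rep L R D).
      rewrite !qproj_hom. apply qproj_eq; auto.
    + intros A B.
      rewrite <- (qproj_rep L R A), <- (qproj_rep L R B).
      rewrite !qproj_hom. apply qproj_eq; auto.
    + intros A. rewrite <- (qproj_rep L R A).
      destruct (rsol L (qrep L R A) (one L)) as [b [Hb _]].
      exists (qproj L R b). rewrite !qproj_hom. split.
      * change (qproj L R (op (qrep L R A) b) = qproj L R (one L)).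
        rewrite <- Hb. apply qproj_eq; auto.
      * change (qproj L R (op b (qrep L R A)) = qproj L R (one L)).
        rewrite Hb; reflexivity.
Qed.

Lemma class_subloop (L : rloop) R (HR : congruence L R) :
  subloop L (fun x => R x (one L)).
Proof.
  split; [|split].
  - apply cong_refl; auto.
  - intros a b Ha Hb. rewrite <- (op1x L (one L)). apply cong_op; auto.
  - intros a b x Ha Hb E. apply (cong_div L R HR a (one L) x (one L)); auto.
    rewrite E, op1x. exact Hb.
Qed.

Definition abelian_meet (L : rloop) (x y : L) : Prop :=
  forall R (HR : congruence L R), abelian_group (quot L R HR) -> R x y.

Lemma abelian_meet_congruence (L : rloop) : congruence L (abelian_meet L).
Proof.
  split; [|split; [|split]].
  - intros x R HR _; apply cong_refl; auto.
  - intros x y H R HR Hab; exact (cong_sym L R HR _ _ (H R HR Hab)).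
  - intros x y z H1 H2 R HR Hab.
    exact (cong_trans L R HR _ y _ (H1 R HR Hab) (H2 R HR Hab)).
  - split; [|split].
    + intros R HR _; apply cong_refl; auto.
    + intros a b Ha Hb R HR Hab.
      exact (proj1 (proj2 (cong_sub L R HR)) a b (Ha R HR Hab) (Hb R HR Hab)).
    + intros a b x Ha Hb E R HR Hab.
      exact (proj2 (proj2 (cong_sub L R HR)) a b x (Ha R HR Hab) (Hb R HR Hab) E).
Qed.

(* The meet still identifies associators and commutators, so its
   quotient is abelian. *)
Lemma abelian_meet_quot (L : rloop) :
  abelian_group (quot L (abelian_meet L) (abelian_meet_congruence L)).
Proof.
  apply quot_abelian_iff. split.
  - intros a b c R HR Hab. apply (proj1 (proj1 (quot_abelian_iff L R HR) Hab)).
  - intros a b R HR Hab. apply (proj2 (proj1 (quot_abelian_iff L R HR) Hab)).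
Qed.

Lemma derived_exists (L : rloop) : exists N (HN : subloop L N), is_derived L N.
Proof.
  exists (fun x => abelian_meet L x (one L)),
         (class_subloop L _ (abelian_meet_congruence L)).
  split.
  - exists (abelian_meet L), (abelian_meet_congruence L).
    split; [tauto | apply abelian_meet_quot].
  - intros R HR Hab x Hx. exact (Hx R HR Hab).
Qed.

Definition is_hom (L S : rloop) (f : L -> S) : Prop :=
  forall x y, f (op x y) = op (f x) (f y).

(* Homomorphisms preserve 1, by unique right division. *)
Lemma hom_one (L S : rloop) (f : L -> S) : is_hom L S f -> f (one L) = one S.
Proof.
  intros Hf. destruct (rsol S (f (one L)) (f (one L))) as [x [_ U]].
  rewrite <- (U (f (one L))), <- (U (one S)); auto.
  - apply op1x.
  - rewrite <- Hf, op1x; reflexivity.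
Qed.

Lemma pullback_congruence (L S : rloop) (f : L -> S) (Hf : is_hom L S f) R
  (HR : congruence S R) : congruence L (fun x y => R (f x) (f y)).
Proof.
  split; [|split; [|split]].
  - intros x; apply cong_refl; auto.
  - intros x y H; apply cong_sym; auto.
  - intros x y z H1 H2; apply (cong_trans S R HR _ (f y)); auto.
  - split; [|split].
    + apply cong_refl; auto.
    + intros [a1 a2] [b1 b2] Ha Hb; simpl in *. unfold prod_op; simpl.
      rewrite !Hf. apply cong_op; auto.
    + intros [a1 a2] [b1 b2] [x1 x2] Ha Hb E; simpl in *.
      unfold prod_op in E; simpl in E. injection E; intros E2 E1.
      apply (cong_div S R HR (f a1) (f a2)); auto.
      rewrite <- !Hf, E1, E2. exact Hb.
Qed.

(* If the image of f is central modulo R, then f maps L^(1) into the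
   R-class of 1: the pullback of R has abelian quotient. *)
Lemma derived_into_class (L S : rloop) (f : L -> S) (Hf : is_hom L S f)
  R (HR : congruence S R) N :
  (forall x, center (quot S R HR) (qproj S R (f x))) ->
  is_derived L N -> forall x, N x -> R (f x) (one S).
Proof.
  intros Hc Hd x Nx.
  assert (Hab : abelian_group (quot L _ (pullback_congruence L S f Hf R HR))).
  { apply quot_abelian_iff. split.
    - intros a b c. apply (qproj_inv S R HR).
      rewrite !Hf, <- !(qproj_hom S R HR).
      apply (proj2 (center_comm_assoc _ _ (Hc a))).
    - intros a b. apply (qproj_inv S R HR).
      rewrite !Hf, <- !(qproj_hom S R HR).
      apply (proj1 (center_comm_assoc _ _ (Hc a))). }
  pose proof (proj2 Hd _ _ Hab x Nx) as Hx; simpl in Hx.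
  rewrite (hom_one L S f Hf) in Hx. exact Hx.
Qed.

Lemma restrict_hom (L S : rloop) (f : L -> S) (Hf : is_hom L S f)
  N (HN : subloop L N) : is_hom (subL L N HN) S (fun u => f (proj1_sig u)).
Proof. intros x y; apply Hf. Qed.

Lemma restrict_injective (L S : rloop) (f : L -> S) N (HN : subloop L N) :
  (forall x y, f x = f y -> x = y) ->
  forall u v : subL L N HN, f (proj1_sig u) = f (proj1_sig v) -> u = v.
Proof. intros Hi u v E; apply sig_eq; auto. Qed.

Section CentralSeries.
Variables (S : rloop) (n : nat) (Z : nat -> S -> Prop).
Hypothesis Z_zero : forall x, Z 0 x <-> x = one S.
Hypothesis Z_step : forall i, i < n ->
  exists (R : S -> S -> Prop) (HR : congruence S R),
    (forall x, Z i x <-> R x (one S)) /\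
    (forall x, Z (Datatypes.S i) x <-> center (quot S R HR) (qproj S R x)).

Lemma embedded_derived_trivial k : k <= n ->
  forall (L : rloop) (f : L -> S), is_hom L S f ->
  (forall x y, f x = f y -> x = y) ->
  (forall x, Z k (f x)) -> derived_trivial k L.
Proof.
  induction k as [|k IH]; intros Hk L f Hf Hi HZ.
  - intros x. apply Hi. rewrite (hom_one L S f Hf). apply Z_zero, HZ.
  - destruct (Z_step k ltac:(lia)) as [R [HR [HZk HZk1]]].
    destruct (derived_exists L) as [N [HN Hd]].
    exists N, HN. split; [exact Hd|].
    apply (IH ltac:(lia) _ _ (restrict_hom L S f Hf N HN)
             (restrict_injective L S f N HN Hi)).
    intros u. apply HZk.
    apply (derived_into_class L S f Hf R HR N); [|exact Hd|exact (proj2_sig u)].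
    intros x; apply HZk1, HZ.
Qed.
End CentralSeries.

Theorem mainTheorem11 (S : rloop) : nilpotent S -> solvable S.
Proof.
  intros [n [Z [Z_zero [Z_top Z_step]]]].
  exists n.
  apply (embedded_derived_trivial S n Z Z_zero Z_step n (le_n n) S (fun x => x)).
  - intros x y; reflexivity.
  - auto.
  - exact Z_top.
Qed.
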